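(* Let $N$ be a one-dimensional homogeneous $S^{1}$-space, $k\geq2$, $\omega$ an $S^{1}$-invariant volume form on $N\times\mathbb{R}^{k}$ (with $S^{1}$ acting via the first factor), $X$ the vector field on $N\times\mathbb{R}^{k}$ generating the $S^{1}$-action, and $h$ a non-constant smooth function on $N\times\mathbb{R}^{k}$ with $X(h)=0$. Then there exists a compactly supported smooth vector field $Y$ on $N\times\mathbb{R}^{k}$ with $\operatorname{div}_{\omega}(Y)=0$ and $[X,Y]=0$ such that $Y(h)$ is not identically zero.
   Context: A one-dimensional homogeneous $S^{1}$-space is a quotient $S^{1}/H$ by a closed subgroup $H$ with $\dim S^{1}/H=1$. For a volume form $\omega$ the divergence is defined by $\operatorname{div}_{\omega}(Y)\,\omega=L_{Y}\omega=d(i_{Y}\omega)$. *)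

From HB Require Import structures.
From mathcomp Require Import all_boot all_order all_algebra.
From mathcomp Require Import all_classical all_reals all_analysis.
Set Implicit Arguments. Unset Strict Implicit. Unset Printing Implicit Defensive.
Import Order.TTheory GRing.Theory Num.Theory.
Import numFieldNormedType.Exports.
Local Open Scope ring_scope.

(* N = S^1/H with H closed and dim N = 1, i.e. H finite cyclic of order m >= 1,
   N = R / (2 pi / m) Z, with S^1 = R / 2 pi Z acting by translation.
   A point of N x R^k is represented by z : 'rV[R]_(k.+1), coordinate 0 being the
   angle theta and coordinates 1..k the R^k-part. Functions/vector fields on
   N x R^k are functions on 'rV_(k.+1) that are periodic in theta with period
   2 pi / m. A vector field is a map 'rV_(k.+1) -> 'rV_(k.+1) (its components in
   the coordinate frame d/dtheta, d/dx_1, ..., d/dx_k). *)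

Section Defs.
Variables (R : realType) (n : nat).
Notation V := 'rV[R]_n.

Definition ev (i : 'I_n) : V := \row_(j < n) (i == j)%:R.

Fixpoint iter_partial (l : seq 'I_n) (f : V -> R) : V -> R :=
  match l with
  | [::] => f
  | i :: l' => fun x => 'D_(ev i) (iter_partial l' f) x
  end.

Definition smooth (f : V -> R) : Prop :=
  forall (l : seq 'I_n) (x : V), differentiable (iter_partial l f) x.

Definition smooth_vf (Y : V -> V) : Prop :=
  forall j : 'I_n, smooth (fun z => Y z 0 j).

Definition vf_app (Y : V -> V) (h : V -> R) : V -> R :=
  fun z => \sum_(i < n) Y z 0 i * 'D_(ev i) h z.

Definition lie (X Y : V -> V) : V -> V :=
  fun z => \row_(j < n) (vf_app X (fun w => Y w 0 j) z
                         - vf_app Y (fun w => X w 0 j) z).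

(* divergence w.r.t. the volume form  rho dtheta /\ dx_1 /\ ... /\ dx_k :
   L_Y omega = d(i_Y omega) = (sum_j d_j (rho Y_j)) dtheta /\ dx,
   so div_omega Y = (1/rho) sum_j d_j (rho Y_j). *)
Definition divergence (rho : V -> R) (Y : V -> V) : V -> R :=
  fun z => (\sum_(j < n) 'D_(ev j) (fun w => rho w * Y w 0 j) z) / rho z.

End Defs.
Arguments ev {R n}.
Arguments iter_partial {R n}.
Arguments smooth {R n}.
Arguments smooth_vf {R n}.
Arguments vf_app {R n}.
Arguments lie {R n}.
Arguments divergence {R n}.

Section Circle.
Variables (R : realType) (k : nat).
Notation V := 'rV[R]_(k.+1).

Definition period (m : nat) : R := 2 * pi / m%:R.

Definition periodic_fun (m : nat) (f : V -> R) : Prop :=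
  forall z : V, f (z + period m *: ev 0) = f z.

Definition periodic_vf (m : nat) (Y : V -> V) : Prop :=
  forall z : V, Y (z + period m *: ev 0) = Y z.

Definition act (t : R) (z : V) : V := z + t *: ev 0.

Definition gen : V -> V := fun z => 'D_1 (fun t : R => act t z) 0.

(* support contained in N x [-B, B]^k, i.e. compact support on N x R^k *)
Definition compactly_supported (Y : V -> V) : Prop :=
  exists B : R, forall z : V,
    (exists i : 'I_(k.+1), (i != 0) && (B < `|z 0 i|)) -> Y z = 0.

(* S^1-invariant volume form omega = rho dtheta /\ dx_1 /\ ... /\ dx_k
   on N x R^k *)
Definition inv_volume_density (m : nat) (rho : V -> R) : Prop :=
  [/\ smooth rho, periodic_fun m rho, forall z, rho z != 0
    & forall t z, rho (act t z) = rho z].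

End Circle.

From HB Require Import structures.
From mathcomp Require Import all_boot all_order all_algebra.
From mathcomp Require Import all_classical all_reals all_analysis.
From mathcomp Require Import ring lra.
Set Implicit Arguments. Unset Strict Implicit. Unset Printing Implicit Defensive.
Import Order.TTheory GRing.Theory Num.Theory.
Import numFieldNormedType.Exports.
Local Open Scope classical_set_scope.
Local Open Scope ring_scope.

(* Since [h] is invariant under the circle action and not constant, some
   partial derivative [d_i h] along an [R^k]-coordinate [x_i] is nonzero at a
   point [z0].  As [k >= 2] there is a second [R^k]-coordinate [x_j].  Take
   [Phi = a(x_i) b(x_j) c(x_l, l <> 0, i, j)] built from bump functions around
   [z0], with [b(x_j) = (x_j - z0_j) bump(x_j - z0_j)], and let
   [Y = rho^-1 ((d_j Phi) e_i - (d_i Phi) e_j)].  Then [rho Y] is a Hamiltonian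
   field, so [Y] is [rho]-divergence free; [Y] is compactly supported and
   independent of the angle, hence commutes with [X = d_theta]; and since
   [b(z0) = 0], [Y(h)(z0) = rho^-1 a b' c d_i h (z0) <> 0]. *)

Section FlatExp.
Variable R : realType.

Definition flat_exp (n : nat) (x : R) : R :=
  if 0 < x then x^-1 ^+ n * expR (- x^-1) else 0.

Lemma flat_exp_le0 n x : x <= 0 -> flat_exp n x = 0.
Proof. by move=> x_le0; rewrite /flat_exp ltNge x_le0. Qed.

Lemma flat_exp_gt0 n x : 0 < x -> 0 < flat_exp n x.
Proof.
by move=> x_gt0; rewrite /flat_exp x_gt0 mulr_gt0 ?exprn_gt0 ?invr_gt0 ?expR_gt0.
Qed.

(* From [expR y >= y ^+ n.+2 / n.+2`!] with [y = h^-1]. *)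
Lemma norm_flat_exp_div_le n (h : R) :
  `|h^-1 * flat_exp n h| <= (n.+2)`!%:R * `|h|.
Proof.
rewrite /flat_exp; case: ifPn => [h_gt0|_]; last by rewrite mulr0 normr0 mulr_ge0.
set y := h^-1; have y_gt0 : 0 < y by rewrite invr_gt0.
have -> : h = y^-1 by rewrite invrK.
have fact_gt0 : 0 < (n.+2)`!%:R :> R by rewrite ltr0n fact_gt0.
have exp_ge : y ^+ n.+2 <= (n.+2)`!%:R * expR y.
  have := expR_ge1Dxn n.+1 (ltW y_gt0).
  by rewrite -ler_pdivrMl // mulrC; lra.
rewrite gtr0_norm ?mulr_gt0 ?exprn_gt0 ?expR_gt0 // gtr0_norm ?invr_gt0 //.
rewrite mulrA -exprS expRN ler_pdivrMr ?expR_gt0 //.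
by rewrite mulrAC ler_pdivlMr // -exprSr.
Qed.

Lemma is_derive_flat_exp_pos n (x : R) : 0 < x ->
  is_derive x (1 : R) (fun y : R => y^-1 ^+ n * expR (- y^-1))
    (- n%:R * (x^-1 ^+ n.+1 * expR (- x^-1)) + x^-1 ^+ n.+2 * expR (- x^-1)).
Proof.
move=> x_gt0.
have dinv : is_derive x (1 : R) (fun y : R => y^-1) (- x ^- 2 *: 1).
  by apply: is_deriveV; rewrite gt_eqF.
have dexp : is_derive x (1 : R) (fun y : R => expR (- y^-1))
    (expR (- x^-1) * - (- x ^- 2 *: 1)).
  exact: (is_derive1_comp (f := fun y => expR y) (g := fun y => - y^-1)).
have dprod := is_deriveM (is_deriveX n dinv) dexp.
have -> : (fun y : R => y^-1 ^+ n * expR (- y^-1)) =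
    (fun y : R => y^-1) ^+ n * (fun y : R => expR (- y^-1)).
  by apply/funext => y; rewrite /= exprfctE.
apply: (is_derive_eq dprod); rewrite /= exprfctE /= -exprVn.
set y := x^-1; set e := expR (- y).
case: n {dprod} => [|n]; rewrite /= ?mul0r ?scale0r /GRing.scale /=; first by ring.
by rewrite !mulr1 -mulrN1 !exprS; ring.
Qed.

(* At [0] the difference quotient is bounded by [norm_flat_exp_div_le]. *)
Lemma is_derive_flat_exp n (x : R) :
  is_derive x (1 : R) (flat_exp n) (- n%:R * flat_exp n.+1 x + flat_exp n.+2 x).
Proof.
have [x_lt0|x_gt0|->] := ltgtP x 0.
- rewrite !flat_exp_le0 ?ltW // mulr0 addr0.
  apply: (@near_eq_is_derive _ _ _ (cst 0)).
  near=> y; rewrite /= flat_exp_le0 // ltW //.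
  by near: y; exact: lt_nbhsl.
- rewrite /flat_exp x_gt0.
  apply: (near_eq_is_derive _ (is_derive_flat_exp_pos n x_gt0)).
  near=> y; rewrite ifT //.
  by rewrite -oppr_lt0; near: y; apply: Nlt_nbhsl; rewrite oppr_lt0.
- rewrite !flat_exp_le0 // mulr0 addr0.
  have fact_gt0 : 0 < (n.+2)`!%:R :> R by rewrite ltr0n fact_gt0.
  have quot0 : (fun h : R => h^-1 *: (flat_exp n (h *: 1 + 0) - flat_exp n 0))
      @ 0^' --> (0 : R).
    apply/cvgr0Pnorm_lt => e e_gt0; near=> h.
    rewrite (flat_exp_le0 _ (lexx 0)) subr0 addr0 [h *: _]mulr1.
    apply: le_lt_trans (norm_flat_exp_div_le n h) _.
    rewrite mulrC -ltr_pdivlMr //.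
    by near: h; apply: dnbhs0_lt; rewrite divr_gt0.
  by apply: DeriveDef; [exact: (cvgP _ quot0) | exact: cvg_lim quot0].
Unshelve. all: by end_near.
Qed.

Lemma derive_affine (b c : R) : 'D_1 (fun t : R => b + t * c) 0 = c.
Proof.
have -> : (fun t : R => b + t * c) = cst b + c \*: id by apply/funext => t; rewrite /= mulrC.
have [_ ->] : is_derive (0 : R) (1 : R) (cst b + c \*: id) (0 + c *: 1) by exact: is_deriveD.
by rewrite add0r [c *: _]mulr1.
Qed.

Lemma derive_flat_exp_affine n (b c : R) :
  'D_1 (fun t : R => flat_exp n (b + t * c)) 0 =
  (- n%:R * flat_exp n.+1 b + flat_exp n.+2 b) * c.
Proof.
have -> : (fun t : R => flat_exp n (b + t * c)) = flat_exp n \o (cst b + c \*: id).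
  by apply/funext => t; rewrite /= mulrC.
have daff : is_derive (0 : R) (1 : R) (cst b + c \*: id) (0 + c *: 1) by exact: is_deriveD.
have [_ ->] := is_derive1_comp (is_derive_flat_exp n ((cst b + c \*: id) 0)) daff.
have -> : (cst b + c \*: id) 0 = b by change (b + c *: (0 : R) = b); rewrite scaler0 addr0.
by rewrite add0r [c%:A]mulr1.
Qed.

End FlatExp.

Section Partials.
Variables (R : realType) (n : nat).
Notation V := 'rV[R]_n.

Lemma difference_quotient_line (F : V -> R) (z v : V) (x : R) :
  (fun h : R => h^-1 *: ((F \o shift (z + x *: v)) (h *: v) - F (z + x *: v))) =
  (fun h : R => h^-1 *: (((fun t : R => F (z + t *: v)) \o shift x) (h *: 1)
                          - F (z + x *: v))).
Proof. by apply/funext => h /=; rewrite [h *: 1]mulr1 scalerDl addrCA addrA. Qed.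

Lemma derive_line_at (F : V -> R) (z v : V) (x : R) :
  'D_v F (z + x *: v) = 'D_1 (fun t : R => F (z + t *: v)) x.
Proof. by rewrite /derive difference_quotient_line. Qed.

Lemma derivable_line_at (F : V -> R) (z v : V) (x : R) :
  derivable F (z + x *: v) v <-> derivable (fun t : R => F (z + t *: v)) x 1.
Proof. by rewrite /derivable difference_quotient_line. Qed.

Lemma derive_line (F : V -> R) (z v : V) :
  'D_v F z = 'D_1 (fun t : R => F (z + t *: v)) 0.
Proof. by rewrite -derive_line_at scale0r addr0. Qed.

Lemma coord_add_scale_ev (z : V) (t : R) (i j : 'I_n) :
  (z + t *: ev j) 0 i = z 0 i + t * (j == i)%:R.
Proof. by rewrite !mxE. Qed.

Lemma derive_coord (z : V) (c d : 'I_n) :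
  'D_(ev d) (fun w : V => w 0 c) z = (d == c)%:R.
Proof.
rewrite derive_line; under eq_fun do rewrite coord_add_scale_ev.
exact: derive_affine.
Qed.

Lemma derive_flat_exp_coord m (a s : R) (i j : 'I_n) (z : V) :
  'D_(ev j) (fun w : V => flat_exp m (a + s * w 0 i)) z =
  s * (j == i)%:R * (- m%:R * flat_exp m.+1 (a + s * z 0 i) + flat_exp m.+2 (a + s * z 0 i)).
Proof.
rewrite derive_line.
under eq_fun do rewrite coord_add_scale_ev mulrDr addrA mulrCA.
by rewrite derive_flat_exp_affine mulrC.
Qed.

Lemma sum_ord_pair (F : 'I_n -> R) (i j : 'I_n) : i != j ->
  (forall l, l != i -> l != j -> F l = 0) -> \sum_(l < n) F l = F i + F j.
Proof.
move=> ij F0; rewrite (bigD1 i) // (bigD1 j) 1?eq_sym //= big1 ?addr0 //.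
by move=> l /andP[li lj]; exact: F0.
Qed.

Lemma smooth_differentiable (f : V -> R) (z : V) : smooth f -> differentiable f z.
Proof. by move=> sf; exact: (sf [::]). Qed.

Lemma smooth_derivable (f : V -> R) (z v : V) : smooth f -> derivable f z v.
Proof. by move=> sf; apply: diff_derivable; exact: smooth_differentiable. Qed.

Lemma smooth_derive (f : V -> R) (j : 'I_n) :
  smooth f -> smooth (fun z => 'D_(ev j) f z).
Proof.
move=> sf l; have -> : iter_partial l (fun z => 'D_(ev j) f z) = iter_partial (l ++ [:: j]) f.
  by elim: l => //= i l ->.
exact: sf.
Qed.

(* [smooth] is not directly closed under products, as an iterated partial of a
   product is not a product.  This class is closed under partials by the
   Leibniz rule, so all its members are smooth. *)
Inductive smooth_gen : (V -> R) -> Prop :=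
| SGsmooth f of smooth f : smooth_gen f
| SGinv f of smooth f & (forall z, f z != 0) : smooth_gen (fun z => (f z)^-1)
| SGcst c : smooth_gen (fun _ => c)
| SGcoord i : smooth_gen (fun z => z 0 i)
| SGflat_exp m a s i : smooth_gen (fun z => flat_exp m (a + s * z 0 i))
| SGadd f g of smooth_gen f & smooth_gen g : smooth_gen (fun z => f z + g z)
| SGmul f g of smooth_gen f & smooth_gen g : smooth_gen (fun z => f z * g z).

Lemma smooth_gen_differentiable f : smooth_gen f -> forall z, differentiable f z.
Proof.
elim=> {f} [f sf|f sf f0|c|i|m a s i|f g _ df _ dg|f g _ df _ dg] z.
- exact: smooth_differentiable.
- by apply: differentiableV => //; exact: smooth_differentiable.
- exact: differentiable_cst.
- exact: differentiable_coord.
- apply: (@differentiable_comp _ _ _ _ (fun z : V => a + s * z 0 i) (flat_exp m)).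
    apply: (differentiableD (differentiable_cst a z)).
    exact: (differentiableM (differentiable_cst s z) (differentiable_coord _ 0 i)).
  by apply/derivable1_diffP; case: (is_derive_flat_exp m (a + s * z 0 i)).
- exact: differentiableD.
- exact: differentiableM.
Qed.

Lemma smooth_gen_derive f : smooth_gen f -> forall j, smooth_gen (fun z => 'D_(ev j) f z).
Proof.
have der g z v : smooth_gen g -> derivable g z v.
  by move=> gg; apply: diff_derivable; exact: smooth_gen_differentiable.
elim=> {f} [f sf|f sf f0|c|i|m a s i|f g gf IHf gg IHg|f g gf IHf gg IHg] j.
- by apply: SGsmooth; exact: smooth_derive.
- have -> : (fun z => 'D_(ev j) (fun y => (f y)^-1) z) =
      (fun z => (-1 * ((f z)^-1 * (f z)^-1)) * 'D_(ev j) f z).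
    apply/funext => z; rewrite deriveV ?f0 //; last exact: smooth_derivable.
    by rewrite /GRing.scale /= -exprVn expr2 mulN1r.
  apply: SGmul; last by apply: SGsmooth; exact: smooth_derive.
  by apply: SGmul; [exact: SGcst | apply: SGmul; exact: SGinv].
- have -> : (fun z => 'D_(ev j) (fun _ : V => c) z) = (fun _ => 0).
    by apply/funext => z; exact: derive_cst.
  exact: SGcst.
- have -> : (fun z => 'D_(ev j) (fun w : V => w 0 i) z) = (fun _ => (j == i)%:R).
    by apply/funext => z; exact: derive_coord.
  exact: SGcst.
- under eq_fun do rewrite derive_flat_exp_coord.
  apply: SGmul; first exact: SGcst.
  by apply: SGadd; [apply: SGmul; [exact: SGcst|] |]; exact: SGflat_exp.
- under eq_fun do rewrite (deriveD (der _ _ _ gf) (der _ _ _ gg)).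
  exact: SGadd.
- under eq_fun do rewrite (deriveM (der _ _ _ gf) (der _ _ _ gg)).
  by apply: SGadd; apply: SGmul.
Qed.

Lemma smooth_gen_smooth f : smooth_gen f -> smooth f.
Proof.
move=> gf l; suff : smooth_gen (iter_partial l f) by move/smooth_gen_differentiable.
by elim: l => //= i l IH; exact: smooth_gen_derive.
Qed.

Lemma smooth_cst (c : R) : smooth (fun _ : V => c).
Proof. exact/smooth_gen_smooth/SGcst. Qed.

Lemma smooth_coord (i : 'I_n) : smooth (fun z : V => z 0 i).
Proof. exact/smooth_gen_smooth/SGcoord. Qed.

Lemma smooth_flat_exp_coord m (a s : R) (i : 'I_n) :
  smooth (fun z : V => flat_exp m (a + s * z 0 i)).
Proof. exact/smooth_gen_smooth/SGflat_exp. Qed.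

Lemma smoothD (f g : V -> R) : smooth f -> smooth g -> smooth (fun z => f z + g z).
Proof. by move=> sf sg; apply/smooth_gen_smooth/SGadd; exact: SGsmooth. Qed.

Lemma smoothM (f g : V -> R) : smooth f -> smooth g -> smooth (fun z => f z * g z).
Proof. by move=> sf sg; apply/smooth_gen_smooth/SGmul; exact: SGsmooth. Qed.

Lemma smoothN (f : V -> R) : smooth f -> smooth (fun z => - f z).
Proof.
move=> sf; under eq_fun do rewrite -mulN1r.
by apply: smoothM => //; exact: smooth_cst.
Qed.

Lemma smoothV (f : V -> R) : smooth f -> (forall z, f z != 0) ->
  smooth (fun z => (f z)^-1).
Proof. by move=> sf f0; apply/smooth_gen_smooth/SGinv. Qed.

Lemma smooth_prod (P : pred 'I_n) (F : 'I_n -> V -> R) :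
  (forall l, P l -> smooth (F l)) -> smooth (fun z => \prod_(l < n | P l) F l z).
Proof.
move=> sF; rewrite /index_enum; elim: (Finite.enum _) => [|l r IH].
  by under eq_fun do rewrite big_nil; exact: smooth_cst.
have [Pl|nPl] := boolP (P l).
  by under eq_fun do rewrite big_cons Pl; apply: smoothM => //; exact: sF.
by under eq_fun do rewrite big_cons (negbTE nPl).
Qed.

End Partials.

Section Invariance.
Variables (R : realType) (n : nat).
Notation V := 'rV[R]_n.

Definition invariant_along (d : 'I_n) (F : V -> R) : Prop :=
  forall (z : V) (t : R), F (z + t *: ev d) = F z.

Lemma derive_invariant_along (d : 'I_n) (F : V -> R) (z : V) :
  invariant_along d F -> 'D_(ev d) F z = 0.
Proof.
move=> Finv; rewrite derive_line.
have -> : (fun t : R => F (z + t *: ev d)) = cst (F z) by apply/funext => t; exact: Finv.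
exact: derive_cst.
Qed.

Lemma invariant_along_derive (d : 'I_n) (F : V -> R) (v : V) :
  invariant_along d F -> invariant_along d (fun z => 'D_v F z).
Proof.
move=> Finv z t /=.
have -> : 'D_v F (z + t *: ev d) = 'D_v (fun w => F (w + t *: ev d)) z.
  by rewrite /derive; do 3 f_equal; apply/funext => h /=; rewrite addrA.
by rewrite (_ : (fun w => F (w + t *: ev d)) = F) //; apply/funext => w; exact: Finv.
Qed.

Lemma invariant_along_coord (d c : 'I_n) (g : R -> R) :
  d != c -> invariant_along d (fun z : V => g (z 0 c)).
Proof. by move=> dc z t; rewrite coord_add_scale_ev (negbTE dc) mulr0 addr0. Qed.

Lemma invariant_alongM (d : 'I_n) (F G : V -> R) :
  invariant_along d F -> invariant_along d G -> invariant_along d (fun z => F z * G z).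
Proof. by move=> Finv Ginv z t; rewrite Finv Ginv. Qed.

Lemma invariant_along_prod (d : 'I_n) (P : pred 'I_n) (F : 'I_n -> V -> R) :
  (forall l, P l -> invariant_along d (F l)) ->
  invariant_along d (fun z => \prod_(l < n | P l) F l z).
Proof. by move=> Finv z t; apply: eq_bigr => l Pl; exact: Finv. Qed.

Lemma derive_mulr_invariant (d : 'I_n) (f g : V -> R) (z : V) :
  smooth f -> smooth g -> invariant_along d g ->
  'D_(ev d) (fun w => f w * g w) z = 'D_(ev d) f z * g z.
Proof.
move=> sf sg ginv.
have -> : 'D_(ev d) (fun w => f w * g w) z = f z * 'D_(ev d) g z + g z * 'D_(ev d) f z.
  by apply: deriveM; exact: smooth_derivable.
by rewrite derive_invariant_along // mulr0 add0r mulrC.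
Qed.

Lemma derive_mull_invariant (d : 'I_n) (f g : V -> R) (z : V) :
  smooth f -> smooth g -> invariant_along d f ->
  'D_(ev d) (fun w => f w * g w) z = f z * 'D_(ev d) g z.
Proof.
move=> sf sg finv.
have -> : 'D_(ev d) (fun w => f w * g w) z = f z * 'D_(ev d) g z + g z * 'D_(ev d) f z.
  by apply: deriveM; exact: smooth_derivable.
by rewrite (derive_invariant_along z finv) mulr0 addr0.
Qed.

Lemma derive_along_eq0 (d : 'I_n) (F : V -> R) (z : V) :
  (forall t : R, `|t| < 1 -> F (z + t *: ev d) = 0) -> 'D_(ev d) F z = 0.
Proof.
move=> F0; rewrite derive_line (@near_eq_derive _ _ _ _ (cst 0)); first exact: derive_cst.
near=> t; rewrite /cst F0 //.
Unshelve. all: by end_near.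
Qed.

Lemma partials_eq0_constant (F : V -> R) : (forall z, differentiable F z) ->
  (forall z c, 'D_(ev c) F z = 0) -> forall z1 z2, F z1 = F z2.
Proof.
move=> dF D0 z1 z2.
have Dv w v : 'D_v F w = 0.
  have ev_delta c : ev c = 'e_c :> V by apply/rowP => l; rewrite !mxE eqxx eq_sym.
  rewrite deriveE // [v]row_sum_delta linear_sum big1 // => c _.
  by rewrite linearZ /= -ev_delta -deriveE // D0 scaler0.
pose g t := F (z1 + t *: (z2 - z1)).
suff : g 0 = g 1 by rewrite /g scale0r addr0 scale1r addrC subrK.
apply: is_derive_0_is_cst => x; apply: DeriveDef.
  by apply/derivable_line_at; exact: diff_derivable.
by rewrite -derive_line_at Dv.
Qed.

Lemma exists_partial_neq0 (d : 'I_n) (F : V -> R) :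
  (forall z, differentiable F z) -> (exists z1 z2, F z1 != F z2) ->
  (forall z, 'D_(ev d) F z = 0) -> exists z (i : 'I_n), i != d /\ 'D_(ev i) F z != 0.
Proof.
move=> dF [z1 [z2 /eqP F12]] Dd; apply: contrapT => nE; apply: F12.
apply: partials_eq0_constant => // z c.
have [->|cd] := eqVneq c d; first exact: Dd.
by have [//|Dc] := eqVneq ('D_(ev c) F z) 0; exfalso; apply: nE; exists z, c.
Qed.

Lemma vf_app_ev (d : 'I_n) (F : V -> R) (z : V) :
  vf_app (fun _ => ev d) F z = 'D_(ev d) F z.
Proof.
rewrite /vf_app (bigD1 d) //= big1 ?addr0 => [|l ld]; first by rewrite mxE eqxx mul1r.
by rewrite mxE eq_sym (negbTE ld) mul0r.
Qed.

Lemma lie_ev (d : 'I_n) (Y : V -> V) (z : V) :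
  (forall l, invariant_along d (fun w => Y w 0 l)) -> lie (fun _ => ev d) Y z = 0.
Proof.
move=> Yinv; apply/rowP => l; rewrite !mxE vf_app_ev derive_invariant_along //.
by rewrite /vf_app big1 ?subr0 // => c _; rewrite derive_cst mulr0.
Qed.

End Invariance.

Section SkewField.
Variables (R : realType) (n : nat).
Notation V := 'rV[R]_n.
Variables (rho : V -> R) (i j : 'I_n) (a b c : V -> R).

(* When [a] does not depend on [x_j] and [b], [c] do not depend on [x_i],
   [rho * skew_field] is the Hamiltonian field [(d_j Phi) e_i - (d_i Phi) e_j]
   of [Phi = a b c] in the [(x_i, x_j)]-plane, hence [rho]-divergence free. *)
Definition skew_field (z : V) : V :=
  \row_l (if l == i then a z * 'D_(ev j) b z * c z / rho z
          else if l == j then - ('D_(ev i) a z * b z * c z) / rho z else 0).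

Hypotheses (srho : smooth rho) (sa : smooth a) (sb : smooth b) (sc : smooth c).
Hypothesis rho_neq0 : forall z, rho z != 0.
Hypothesis ij : i != j.

Lemma smooth_skew_field : smooth_vf skew_field.
Proof.
move=> l; under eq_fun do rewrite mxE.
have sDa := smooth_derive i sa; have sDb := smooth_derive j sb.
case: (l == i); [|case: (l == j)]; last exact: smooth_cst.
- by apply: smoothM; [apply: smoothM; first apply: smoothM | exact: smoothV].
- apply: smoothM; last exact: smoothV.
  by apply: smoothN; apply: smoothM; first apply: smoothM.
Qed.

Lemma invariant_along_skew_field (d : 'I_n) :
  invariant_along d rho -> invariant_along d a -> invariant_along d b ->
  invariant_along d c -> forall l, invariant_along d (fun z => skew_field z 0 l).
Proof.
move=> rinv ainv binv cinv l z t.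
have Dainv := invariant_along_derive (ev i) ainv.
have Dbinv := invariant_along_derive (ev j) binv.
by rewrite !mxE rinv ainv binv cinv Dainv Dbinv.
Qed.

Lemma divergence_skew_field :
  invariant_along j a -> invariant_along i b -> invariant_along i c ->
  invariant_along j c -> forall z, divergence rho skew_field z = 0.
Proof.
move=> aj bi ci cj z; have ji : j != i by rewrite eq_sym.
have sDa := smooth_derive i sa; have sDb := smooth_derive j sb.
have rhoY l : (fun w => rho w * skew_field w 0 l) =
    if l == i then (fun w => a w * 'D_(ev j) b w * c w)
    else if l == j then (fun w => - ('D_(ev i) a w * b w * c w)) else (fun _ => 0).
  case: ifP => li; [|case: ifP => lj]; apply/funext => w; rewrite mxE ?li ?lj;
    by rewrite ?mulr0 // mulrCA mulfV // mulr1.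
rewrite /divergence (sum_ord_pair
  (F := fun l => 'D_(ev l) (fun w => rho w * skew_field w 0 l) z) ij); last first.
  by move=> l li lj; rewrite rhoY (negbTE li) (negbTE lj) derive_cst.
rewrite /= !rhoY eqxx (negbTE ji) eqxx.
have -> : 'D_(ev j) (fun w => - ('D_(ev i) a w * b w * c w)) z =
    - 'D_(ev j) (fun w => 'D_(ev i) a w * b w * c w) z.
  by apply: deriveN; apply: smooth_derivable; apply: smoothM; first apply: smoothM.
have Dij_b := invariant_along_derive (ev j) bi; have Dji_a := invariant_along_derive (ev i) aj.
have -> : 'D_(ev i) (fun w => a w * 'D_(ev j) b w * c w) z =
    'D_(ev i) a z * 'D_(ev j) b z * c z.
  transitivity ('D_(ev i) (fun w => a w * 'D_(ev j) b w) z * c z).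
    by apply: derive_mulr_invariant => //; exact: smoothM.
  by congr (_ * _); exact: derive_mulr_invariant.
have -> : 'D_(ev j) (fun w => 'D_(ev i) a w * b w * c w) z =
    'D_(ev i) a z * 'D_(ev j) b z * c z.
  transitivity ('D_(ev j) (fun w => 'D_(ev i) a w * b w) z * c z).
    by apply: derive_mulr_invariant => //; exact: smoothM.
  by congr (_ * _); exact: derive_mull_invariant.
by rewrite subrr mul0r.
Qed.

Lemma skew_field_eq0 (z : V) :
  [\/ a z = 0 /\ 'D_(ev i) a z = 0, b z = 0 /\ 'D_(ev j) b z = 0 | c z = 0] ->
  skew_field z = 0.
Proof.
move=> vanish; apply/rowP => l; rewrite !mxE.
by case: vanish => [[-> ->]|[-> ->]|->]; rewrite !(mulr0, mul0r, oppr0);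
  case: ifP => //; case: ifP.
Qed.

Lemma vf_app_skew_field (F : V -> R) (z : V) : b z = 0 ->
  vf_app skew_field F z = a z * 'D_(ev j) b z * c z / rho z * 'D_(ev i) F z.
Proof.
move=> bz0; have ji : j != i by rewrite eq_sym.
rewrite /vf_app (sum_ord_pair ij) => [|l li lj]; last first.
  by rewrite mxE (negbTE li) (negbTE lj) mul0r.
by rewrite !mxE eqxx (negbTE ji) eqxx bz0 !(mulr0, mul0r) oppr0 !mul0r addr0.
Qed.

End SkewField.

Section Bump.
Variables (R : realType) (n : nat).
Notation V := 'rV[R]_n.

Definition bump (x : R) : R := flat_exp 0 (1 + x) * flat_exp 0 (1 - x).

Lemma bump_eq0 (x : R) : 1 <= `|x| -> bump x = 0.
Proof.
rewrite /bump; have [x_ge0|x_lt0] := lerP 0 x.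
  by rewrite ger0_norm // => x_ge1; rewrite [flat_exp 0 (1 - x)]flat_exp_le0 ?mulr0 //; lra.
by rewrite ltr0_norm // => x_le1; rewrite flat_exp_le0 ?mul0r //; lra.
Qed.

Lemma bump0_neq0 : bump 0 != 0.
Proof. by rewrite /bump subr0 addr0 mulf_neq0 // gt_eqF // flat_exp_gt0. Qed.

Definition bump_at (z0 : V) (l : 'I_n) (z : V) : R := bump (z 0 l - z0 0 l).

Lemma smooth_bump_at (z0 : V) (l : 'I_n) : smooth (bump_at z0 l).
Proof.
have -> : bump_at z0 l = fun z => flat_exp 0 ((1 - z0 0 l) + 1 * z 0 l) *
                                  flat_exp 0 ((1 + z0 0 l) + -1 * z 0 l).
  by apply/funext => z; rewrite /bump_at /bump; congr (flat_exp 0 _ * flat_exp 0 _); ring.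
by apply: smoothM; exact: smooth_flat_exp_coord.
Qed.

Lemma invariant_along_bump_at (d : 'I_n) (z0 : V) (l : 'I_n) :
  d != l -> invariant_along d (bump_at z0 l).
Proof. exact: (@invariant_along_coord _ _ d l (fun x => bump (x - z0 0 l))). Qed.

Lemma bump_at_eq0 (z0 z : V) (l : 'I_n) : 1 <= `|z 0 l - z0 0 l| -> bump_at z0 l z = 0.
Proof. exact: bump_eq0. Qed.

Lemma bump_at_center_neq0 (z0 : V) (l : 'I_n) : bump_at z0 l z0 != 0.
Proof. by rewrite /bump_at subrr bump0_neq0. Qed.

Lemma eq0_far_from_slab (z0 : V) (l : 'I_n) (F : V -> R) (z : V) :
  (forall w : V, 1 <= `|w 0 l - z0 0 l| -> F w = 0) -> 2 < `|z 0 l - z0 0 l| ->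
  F z = 0 /\ 'D_(ev l) F z = 0.
Proof.
move=> F0 far; split; first by apply: F0; lra.
apply: derive_along_eq0 => t t_lt1; apply: F0.
rewrite coord_add_scale_ev eqxx mulr1.
have := ler_normD (z 0 l + t - z0 0 l) (- t).
by rewrite normrN (_ : z 0 l + t - z0 0 l + - t = z 0 l - z0 0 l); [lra | ring].
Qed.

End Bump.

Section BumpField.
Variables (R : realType) (k : nat).
Notation V := 'rV[R]_k.+1.

Lemma gen_ev : @gen R k = fun _ => ev 0.
Proof.
apply/funext => z; rewrite /gen /act.
have -> : (fun t : R => z + t *: ev 0) = cst z + ( *:%R^~ (ev 0 : V)) by apply/funext.
have dline : is_diff (0 : R) (cst z + ( *:%R^~ (ev 0 : V))) (0 + ( *:%R^~ (ev 0 : V))).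
  exact: is_diffD.
by rewrite deriveE; case: dline => // _ ->; rewrite /= add0r scale1r.
Qed.

Lemma exists_index_neq0 (i : 'I_k.+1) : (2 <= k)%N -> exists j : 'I_k.+1, j != 0 /\ i != j.
Proof.
move=> k_ge2; have k1 : (1 < k.+1)%N by exact: leqW.
exists (if i == inord 1 then inord 2 else inord 1); split.
  by case: ifP => _; apply/eqP => /(congr1 val) /=; rewrite inordK.
case: ifP => [/eqP ->|-> //].
by apply/eqP => /(congr1 val) /=; rewrite !inordK.
Qed.

Variables (rho : V -> R) (z0 : V) (i j : 'I_k.+1).
Hypotheses (i_neq0 : i != 0) (j_neq0 : j != 0) (ij : i != j).
Hypotheses (srho : smooth rho) (rho_neq0 : forall z, rho z != 0).
Hypothesis rho_inv : invariant_along 0 rho.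

Let a : V -> R := bump_at z0 i.
Let b (z : V) : R := (z 0 j - z0 0 j) * bump_at z0 j z.
Let c (z : V) : R := \prod_(l < k.+1 | (l != 0) && (l != i) && (l != j)) bump_at z0 l z.

Definition bump_field : V -> V := skew_field rho i j a b c.

Let smooth_shifted_coord : smooth (fun z : V => z 0 j - z0 0 j).
Proof. by apply: smoothD; [exact: smooth_coord | exact: smooth_cst]. Qed.

Let sb : smooth b.
Proof. by apply: smoothM; [exact: smooth_shifted_coord | exact: smooth_bump_at]. Qed.

Let sc : smooth c.
Proof. by apply: smooth_prod => l _; exact: smooth_bump_at. Qed.

Let invariant_along_c (d : 'I_k.+1) : [|| d == 0, d == i | d == j] -> invariant_along d c.
Proof.
move=> d_in; apply: invariant_along_prod => l /andP[/andP[l0 li] lj].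
by apply: invariant_along_bump_at; apply: contraTneq d_in => ->; rewrite (negbTE l0) (negbTE li) (negbTE lj).
Qed.

Let invariant_along_b (d : 'I_k.+1) : d != j -> invariant_along d b.
Proof.
move=> dj; apply: invariant_alongM; last exact: invariant_along_bump_at.
exact: (@invariant_along_coord _ _ d j (fun x => x - z0 0 j)).
Qed.

Lemma smooth_bump_field : smooth_vf bump_field.
Proof. exact: smooth_skew_field (smooth_bump_at _ _) sb sc rho_neq0. Qed.

Lemma invariant_along_bump_field l : invariant_along 0 (fun z => bump_field z 0 l).
Proof.
apply: invariant_along_skew_field => //; last by apply: invariant_along_c; rewrite eqxx.
  by apply: invariant_along_bump_at; rewrite eq_sym.
by apply: invariant_along_b; rewrite eq_sym.
Qed.

Lemma divergence_bump_field z : divergence rho bump_field z = 0.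
Proof.
apply: divergence_skew_field => //; first exact: smooth_bump_at.
- by apply: invariant_along_bump_at; rewrite eq_sym.
- exact: invariant_along_b.
- by apply: invariant_along_c; rewrite eqxx orbT.
- by apply: invariant_along_c; rewrite eqxx !orbT.
Qed.

Lemma compactly_supported_bump_field : compactly_supported bump_field.
Proof.
exists (\sum_(l < k.+1) `|z0 0 l| + 2) => z [l /andP[l0 far]].
have {}far : 2 < `|z 0 l - z0 0 l|.
  have : `|z0 0 l| <= \sum_(l < k.+1) `|z0 0 l|.
    by rewrite (bigD1 l) //= lerDl sumr_ge0.
  by have := lerB_dist (z 0 l) (z0 0 l); lra.
apply: skew_field_eq0.
have [il|li] := eqVneq l i; first by subst l; apply: Or31; apply: eq0_far_from_slab far => w; exact: bump_at_eq0.
have [jl|lj] := eqVneq l j.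
  by subst l; apply: Or32; apply: eq0_far_from_slab far => w w_far; rewrite /b bump_at_eq0 ?mulr0.
apply: Or33; rewrite /c (bigD1 l) /=; last by rewrite l0 li lj.
by rewrite bump_at_eq0 ?mul0r //; lra.
Qed.

Lemma vf_app_bump_field (F : V -> R) :
  'D_(ev i) F z0 != 0 -> vf_app bump_field F z0 != 0.
Proof.
move=> DF; rewrite vf_app_skew_field ?ij //; last by rewrite /b subrr mul0r.
have Db : 'D_(ev j) b z0 = bump_at z0 j z0.
  have Dlin : 'D_(ev j) (fun w : V => w 0 j - z0 0 j) z0 = 1.
    transitivity ('D_(ev j) (fun w : V => w 0 j) z0 + 'D_(ev j) (fun _ : V => - z0 0 j) z0).
      by apply: deriveD; apply: smooth_derivable; [exact: smooth_coord | exact: smooth_cst].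
    by rewrite derive_coord eqxx derive_cst addr0.
  transitivity ((z0 0 j - z0 0 j) * 'D_(ev j) (bump_at z0 j) z0 +
                bump_at z0 j z0 * 'D_(ev j) (fun w : V => w 0 j - z0 0 j) z0).
    by apply: deriveM; apply: smooth_derivable; [exact: smooth_shifted_coord | exact: smooth_bump_at].
  by rewrite Dlin subrr mul0r add0r mulr1.
rewrite Db; apply: mulf_neq0 => //; apply: mulf_neq0; last by rewrite invr_eq0.
apply: mulf_neq0; first by apply: mulf_neq0; exact: bump_at_center_neq0.
by apply/prodf_neq0 => l _; exact: bump_at_center_neq0.
Qed.

End BumpField.

Theorem lemma3p4 (R : realType) (m k : nat) (hm : (0 < m)%N) (hk : (2 <= k)%N)
  (rho : 'rV[R]_(k.+1) -> R) (h : 'rV[R]_(k.+1) -> R) :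
  inv_volume_density m rho ->
  smooth h -> periodic_fun m h ->
  (exists z1 z2, h z1 != h z2) ->
  (forall z, vf_app (@gen R k) h z = 0) ->
  exists Y : 'rV[R]_(k.+1) -> 'rV[R]_(k.+1),
    [/\ smooth_vf Y, periodic_vf m Y, compactly_supported Y,
        forall z, divergence rho Y z = 0 &
        (forall z, lie (@gen R k) Y z = 0) /\ (exists z, vf_app Y h z != 0)].
Proof.
move=> [srho _ rho_neq0 rho_act] sh _ h_nonconst; rewrite gen_ev => Dh0.
have [z0 [i [i_neq0 Dh]]] : exists z0 (i : 'I_k.+1), i != 0 /\ 'D_(ev i) h z0 != 0.
  apply: exists_partial_neq0 h_nonconst _ => z; last by rewrite -vf_app_ev Dh0.
  exact: smooth_differentiable.
have [j [j_neq0 ij]] := exists_index_neq0 i hk.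
have rho_inv : invariant_along 0 rho by move=> z t; exact: rho_act.
have Yinv l : invariant_along 0 (fun z => bump_field rho z0 i j z 0 l).
  exact: invariant_along_bump_field.
exists (bump_field rho z0 i j); split.
- exact: smooth_bump_field.
- by move=> z; apply/rowP => l; exact: Yinv.
- exact: compactly_supported_bump_field.
- exact: divergence_bump_field.
- split; last by exists z0; exact: vf_app_bump_field.
  by move=> z; exact: lie_ev.
Qed.
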